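(* Let $(G,* )$ be a topological group satisfying ${\sf S}_c(\mathcal{O}_{\sf nbd},\mathcal{O})$ and let $(H,* )$ be a topological group satisfying ${\sf S}_c(\mathcal{O}_{\sf nbd},\mathcal{O}^{cgp})$. Then the product group $G\times H$ satisfies ${\sf S}_c(\mathcal{O}_{\sf nbd},\mathcal{O})$.
   Context: For a topological group $(G,* )$ with identity $e$ and a neighborhood $U$ of $e$, $\mathcal{O}(U)=\{x*U:x\in G\}$ and $\mathcal{O}_{\sf nbd}=\{\mathcal{O}(U):U\text{ a neighborhood of }e\}$. $\mathcal{O}$ is the collection of all open covers. An open cover $\mathcal{U}$ is c-groupable if there is a partition $\mathcal{U}=\bigcup_{n<\infty}\mathcal{U}_n$ where each $\mathcal{U}_n$ is pairwise disjoint and each point lies in all but finitely many of the sets $\bigcup\mathcal{U}_n$; $\mathcal{O}^{cgp}$ denotes the collection of c-groupable open covers. A family $\mathcal{B}$ refines $\mathcal{A}$ if every member of $\mathcal{B}$ is contained in some member of $\mathcal{A}$. ${\sf S}_c(\mathcal{A},\mathcal{B})$: for each sequence $(A_n:n<\infty)$ of elements of $\mathcal{A}$ there is a sequence $(B_n:n<\infty)$ such that each $B_n$ is a pairwise disjoint family of open sets refining $A_n$ and $\bigcup_nB_n\in\mathcal{B}$. *)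

From Stdlib Require Import Arith.

Set Implicit Arguments.

Definition is_topology (T : Type) (open : (T -> Prop) -> Prop) : Prop :=
  open (fun _ => True) /\
  (forall F : (T -> Prop) -> Prop,
      (forall A, F A -> open A) -> open (fun x => exists A, F A /\ A x)) /\
  (forall A B, open A -> open B -> open (fun x => A x /\ B x)).

Definition prod_open (T1 T2 : Type) (open1 : (T1 -> Prop) -> Prop)
  (open2 : (T2 -> Prop) -> Prop) (W : T1 * T2 -> Prop) : Prop :=
  forall p, W p -> exists U V, open1 U /\ open2 V /\ U (fst p) /\ V (snd p) /\
    (forall a b, U a -> V b -> W (a, b)).

Definition continuous (X Y : Type) (openX : (X -> Prop) -> Prop)
  (openY : (Y -> Prop) -> Prop) (f : X -> Y) : Prop :=
  forall V, openY V -> openX (fun x => V (f x)).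

Definition is_group (G : Type) (op : G -> G -> G) (inv : G -> G) (e : G) : Prop :=
  (forall x y z, op x (op y z) = op (op x y) z) /\
  (forall x, op e x = x) /\ (forall x, op x e = x) /\
  (forall x, op (inv x) x = e) /\ (forall x, op x (inv x) = e).

Definition is_topological_group (G : Type) (op : G -> G -> G) (inv : G -> G)
  (e : G) (open : (G -> Prop) -> Prop) : Prop :=
  is_topology open /\ is_group op inv e /\
  continuous (prod_open open open) open (fun p => op (fst p) (snd p)) /\
  continuous open open inv.

Definition prod_op (G H : Type) (opG : G -> G -> G) (opH : H -> H -> H)
  (p q : G * H) : G * H := (opG (fst p) (fst q), opH (snd p) (snd q)).
Definition prod_inv (G H : Type) (invG : G -> G) (invH : H -> H) (p : G * H)
  : G * H := (invG (fst p), invH (snd p)).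

Definition nbd_e (G : Type) (open : (G -> Prop) -> Prop) (e : G) (U : G -> Prop)
  : Prop := open U /\ U e.

Definition lcoset (G : Type) (op : G -> G -> G) (x : G) (U : G -> Prop) : G -> Prop :=
  fun y => exists u, U u /\ y = op x u.

Definition OU (G : Type) (op : G -> G -> G) (U : G -> Prop) : (G -> Prop) -> Prop :=
  fun V => exists x, V = lcoset op x U.

Definition O_nbd (G : Type) (op : G -> G -> G) (e : G) (open : (G -> Prop) -> Prop)
  : ((G -> Prop) -> Prop) -> Prop :=
  fun F => exists U, nbd_e open e U /\ F = OU op U.

Definition open_cover (T : Type) (open : (T -> Prop) -> Prop)
  (F : (T -> Prop) -> Prop) : Prop :=
  (forall A, F A -> open A) /\ (forall x, exists A, F A /\ A x).

Definition disjoint_sets (T : Type) (A B : T -> Prop) : Prop :=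
  forall x, A x -> B x -> False.

Definition pairwise_disjoint (T : Type) (F : (T -> Prop) -> Prop) : Prop :=
  forall A B, F A -> F B -> A <> B -> disjoint_sets A B.

Definition cgroupable_open_cover (T : Type) (open : (T -> Prop) -> Prop)
  (F : (T -> Prop) -> Prop) : Prop :=
  open_cover open F /\
  exists P : nat -> (T -> Prop) -> Prop,
    (forall A, F A <-> exists n, P n A) /\
    (forall n m A, P n A -> P m A -> n = m) /\
    (forall n, pairwise_disjoint (P n)) /\
    (forall x, exists N, forall n, N <= n -> exists A, P n A /\ A x).

Definition refines (T : Type) (B A : (T -> Prop) -> Prop) : Prop :=
  forall V, B V -> exists W, A W /\ (forall x, V x -> W x).

Definition S_c (T : Type) (open : (T -> Prop) -> Prop)
  (CA CB : ((T -> Prop) -> Prop) -> Prop) : Prop :=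
  forall A : nat -> (T -> Prop) -> Prop, (forall n, CA (A n)) ->
  exists B : nat -> (T -> Prop) -> Prop,
    (forall n, pairwise_disjoint (B n) /\ (forall V, B n V -> open V) /\
               refines (B n) (A n)) /\
    CB (fun V => exists n, B n V).

From Stdlib Require Import Arith Lia List Cantor Classical ClassicalEpsilon.

(* Every neighbourhood of the identity of G x H contains a rectangle
   U n x V n of neighbourhoods, so it suffices to select, for such
   rectangles, disjoint families B p of open sets refining O(U p x V p)
   whose union covers G x H (rectangle_selection).  The members of B p are
   products A x M:
   - in G, the selection principle is applied along each row of N x N,
     giving disjoint refinements D d whose every tail still covers G
     (S_c_tail_covers);
   - in H, the selection is c-groupable, and a pigeonhole argument shows
     that every point b lies, for every large d, in a piece of some group
     P (d + x), x <= d, taken from a late family C n, n >= d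
     (cgroupable_late_pieces).
   The index p = to_nat (x, y) pairs D (x + y) with the group P (x + y + x);
   using the finite intersections of the U n, V n (initial_meet) the
   refinements at the large indices x + y and n also refine O(U p), O(V p). *)

Set Implicit Arguments.
Unset Strict Implicit.

Lemma pigeonhole_large_value (f : nat -> nat) (a d : nat) :
  (forall k1 k2, a <= k1 <= a + d -> a <= k2 <= a + d -> f k1 = f k2 -> k1 = k2) ->
  exists k, a <= k <= a + d /\ d <= f k.
Proof.
  intros f_inj. apply NNPP; intro no_large.
  assert (small : forall k, a <= k <= a + d -> f k < d).
  { intros k Hk. apply Nat.nlt_ge. intro Hle. apply no_large. exists k. lia. }
  assert (values_nodup : NoDup (map f (seq a (S d)))).
  { apply NoDup_map_NoDup_ForallPairs; [|apply seq_NoDup].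
    intros k1 k2 H1 H2. apply in_seq in H1, H2. apply f_inj; lia. }
  assert (values_incl : incl (map f (seq a (S d))) (seq 0 d)).
  { intros z Hz. apply in_map_iff in Hz as [k [<- Hk]].
    apply in_seq in Hk. apply in_seq. specialize (small k). lia. }
  pose proof (NoDup_incl_length values_nodup values_incl) as Hlen.
  rewrite length_map, !length_seq in Hlen. lia.
Qed.

(* A Cantor code to_nat (x, y) is bounded by a monotone function of x + y;
   this lets a selection indexed by the anti-diagonal x + y serve every
   index p lying on that anti-diagonal. *)
Definition pair_bound (d : nat) : nat := (d + 1) * (d + 1).

Lemma pair_bound_mono m n : m <= n -> pair_bound m <= pair_bound n.
Proof. unfold pair_bound; nia. Qed.

Lemma to_nat_le_pair_bound x y : to_nat (x, y) <= pair_bound (x + y).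
Proof. pose proof (to_nat_spec x y). unfold pair_bound. nia. Qed.

Lemma pairwise_disjoint_eq (T : Type) (F : (T -> Prop) -> Prop) A B x :
  pairwise_disjoint F -> F A -> F B -> A x -> B x -> A = B.
Proof.
  intros Fdisj FA FB Ax Bx. apply NNPP; intro AB. exact (Fdisj A B FA FB AB x Ax Bx).
Qed.

Fixpoint initial_meet {T : Type} (U : nat -> T -> Prop) (n : nat) : T -> Prop :=
  match n with
  | 0 => U 0
  | S n => fun x => initial_meet U n x /\ U (S n) x
  end.

Lemma initial_meet_le (T : Type) (U : nat -> T -> Prop) n m x :
  m <= n -> initial_meet U n x -> U m x.
Proof.
  induction n as [|n IHn]; simpl; intros Hm Hx.
  - replace m with 0 by lia. exact Hx.
  - destruct Hx as [Hx HU]. destruct (Nat.eq_dec m (S n)) as [->|]; auto.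
    apply IHn; [lia|exact Hx].
Qed.

Lemma initial_meet_nbd (T : Type) (open : (T -> Prop) -> Prop) (e : T)
  (U : nat -> T -> Prop) :
  is_topology open -> (forall n, nbd_e open e (U n)) ->
  forall n, nbd_e open e (initial_meet U n).
Proof.
  intros [_ [_ open_meet]] U_nbd n. induction n as [|n [IHo IHe]]; simpl.
  - apply U_nbd.
  - destruct (U_nbd (S n)) as [Uo Ue]. split; auto.
Qed.

Lemma refines_OU_mono (T : Type) (op : T -> T -> T) (F : (T -> Prop) -> Prop)
  (U U' : T -> Prop) :
  (forall u, U u -> U' u) -> refines F (OU op U) -> refines F (OU op U').
Proof.
  intros UU' Fref A FA. destruct (Fref A FA) as [W [[x ->] AW]].
  exists (lcoset op x U'). split; [exists x; reflexivity|].
  intros y Ay. destruct (AW y Ay) as [u [Uu ->]]. exists u; auto.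
Qed.

(* Splitting N x N into countably many copies of N, S_c(O_nbd, O) yields,
   for any sequence of neighbourhoods U d, disjoint refinements D d of O(U d)
   such that every tail (D d)_{d >= N} still covers the space. *)
Lemma S_c_tail_covers (T : Type) (op : T -> T -> T) (e : T)
  (open : (T -> Prop) -> Prop) (U : nat -> T -> Prop) :
  S_c open (O_nbd op e open) (open_cover open) ->
  (forall d, nbd_e open e (U d)) ->
  exists D : nat -> (T -> Prop) -> Prop,
    (forall d, pairwise_disjoint (D d) /\ (forall A, D d A -> open A) /\
               refines (D d) (OU op (U d))) /\
    (forall N a, exists d A, N <= d /\ D d A /\ A a).
Proof.
  intros S_T U_nbd.
  assert (row_selection : forall j, exists Dj : nat -> (T -> Prop) -> Prop,
    (forall r, pairwise_disjoint (Dj r) /\ (forall A, Dj r A -> open A) /\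
               refines (Dj r) (OU op (U (to_nat (j, r))))) /\
    open_cover open (fun A => exists r, Dj r A)).
  { intro j. apply S_T. intro r. exists (U (to_nat (j, r))). split; auto. }
  destruct (choice _ row_selection) as [Drow Drow_spec].
  exists (fun d => Drow (fst (of_nat d)) (snd (of_nat d))). split.
  - intro d. pose proof (cancel_to_of d) as code_d.
    destruct (of_nat d) as [j r]. simpl. rewrite <- code_d. apply Drow_spec.
  - intros N a. destruct (proj2 (proj2 (Drow_spec N)) a) as [A [[r DA] Aa]].
    exists (to_nat (N, r)), A. rewrite cancel_of_to; cbn [fst snd].
    pose proof (to_nat_non_decreasing N r). split; [lia|auto].
Qed.

(* A point b lies, for
   all large k, in a piece of P k, and distinct such k use distinct indices n;
   by pigeonhole, for every large d some group P (d + x), x <= d, has a piece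
   containing b that comes from a family C n with n >= d. *)
Lemma cgroupable_late_pieces (T : Type) (open : (T -> Prop) -> Prop)
  (C : nat -> (T -> Prop) -> Prop) :
  (forall n, pairwise_disjoint (C n)) ->
  cgroupable_open_cover open (fun A => exists n, C n A) ->
  exists P : nat -> (T -> Prop) -> Prop,
    (forall k, pairwise_disjoint (P k)) /\
    (forall b, exists N, forall d, N <= d ->
       exists x M n, x <= d /\ d <= n /\ P (d + x) M /\ C n M /\ M b).
Proof.
  intros C_disj [_ [P [P_union [P_unique [P_disj P_eventually]]]]].
  exists P. split; [exact P_disj|]. intro b.
  destruct (P_eventually b) as [N HN]. exists N.
  assert (piece : forall k, exists Mn : (T -> Prop) * nat,
            N <= k -> P k (fst Mn) /\ C (snd Mn) (fst Mn) /\ fst Mn b).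
  { intro k. destruct (le_lt_dec N k) as [Nk|kN].
    - destruct (HN k Nk) as [M [PM Mb]].
      destruct (proj2 (P_union M) (ex_intro _ k PM)) as [n CM].
      exists (M, n). auto.
    - exists (fun _ => False, 0). lia. }
  destruct (choice _ piece) as [Mn Mn_spec].
  intros d Nd.
  destruct (@pigeonhole_large_value (fun k => snd (Mn k)) d d) as [k [Hk dn]].
  - intros k1 k2 H1 H2 same_n.
    destruct (Mn_spec k1) as [P1 [C1 b1]]; [lia|].
    destruct (Mn_spec k2) as [P2 [C2 b2]]; [lia|].
    simpl in same_n. rewrite same_n in C1.
    rewrite (pairwise_disjoint_eq (C_disj _) C1 C2 b1 b2) in P1.
    exact (P_unique _ _ _ P1 P2).
  - destruct (Mn_spec k) as [Pk [Ck bk]]; [lia|].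
    exists (k - d), (fst (Mn k)), (snd (Mn k)).
    replace (d + (k - d)) with k by lia. repeat split; auto; lia.
Qed.

Section Rectangles.

Variables (G H : Type).

Definition rect (A : G -> Prop) (B : H -> Prop) : G * H -> Prop :=
  fun q => A (fst q) /\ B (snd q).

Definition rects (F1 : (G -> Prop) -> Prop) (F2 : (H -> Prop) -> Prop)
  : (G * H -> Prop) -> Prop :=
  fun R => exists A B, F1 A /\ F2 B /\ R = rect A B.

(* Distinct rectangles from two disjoint families differ in a side, and the
   sides are then disjoint. *)
Lemma rects_pairwise_disjoint F1 F2 :
  pairwise_disjoint F1 -> pairwise_disjoint F2 -> pairwise_disjoint (rects F1 F2).
Proof.
  intros F1_disj F2_disj R1 R2 [A1 [B1 [FA1 [FB1 ->]]]] [A2 [B2 [FA2 [FB2 ->]]]]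
    R12 [a b] [A1a B1b] [A2a B2b].
  apply R12. simpl in *.
  rewrite (pairwise_disjoint_eq F1_disj FA1 FA2 A1a A2a).
  rewrite (pairwise_disjoint_eq F2_disj FB1 FB2 B1b B2b). reflexivity.
Qed.

Lemma rects_open (openG : (G -> Prop) -> Prop) (openH : (H -> Prop) -> Prop) F1 F2 :
  (forall A, F1 A -> openG A) -> (forall B, F2 B -> openH B) ->
  forall R, rects F1 F2 R -> prod_open openG openH R.
Proof.
  intros F1_open F2_open R [A [B [FA [FB ->]]]] q Rq.
  exists A, B. repeat split; try apply Rq; auto.
Qed.

(* Translates x U and y V give the translate (x, y) (U x V). *)
Lemma rects_refine (opG : G -> G -> G) (opH : H -> H -> H) U V F1 F2 :
  refines F1 (OU opG U) -> refines F2 (OU opH V) ->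
  refines (rects F1 F2) (OU (prod_op opG opH) (rect U V)).
Proof.
  intros F1_ref F2_ref R [A [B [FA [FB ->]]]].
  destruct (F1_ref A FA) as [WA [[x ->] AxU]].
  destruct (F2_ref B FB) as [WB [[y ->] ByV]].
  exists (lcoset (prod_op opG opH) (x, y) (rect U V)). split; [exists (x, y); reflexivity|].
  intros [a b] [Aa Bb].
  destruct (AxU a Aa) as [u [Uu ->]]. destruct (ByV b Bb) as [v [Vv ->]].
  exists (u, v). split; [split; assumption|reflexivity].
Qed.

Lemma prod_nbd_rectangle (openG : (G -> Prop) -> Prop) (openH : (H -> Prop) -> Prop)
  (eG : G) (eH : H) (W : G * H -> Prop) :
  nbd_e (prod_open openG openH) (eG, eH) W ->
  exists U V, nbd_e openG eG U /\ nbd_e openH eH V /\ (forall q, rect U V q -> W q).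
Proof.
  intros [W_open We]. destruct (W_open _ We) as [U [V [Uo [Vo [Ue [Ve UVW]]]]]].
  exists U, V. repeat split; auto. intros [a b] [Ua Vb]. exact (UVW a b Ua Vb).
Qed.

End Rectangles.

Section Selection.

Variables (G H : Type) (opG : G -> G -> G) (opH : H -> H -> H).
Variables (openG : (G -> Prop) -> Prop) (openH : (H -> Prop) -> Prop).
Variables (U : nat -> G -> Prop) (V : nat -> H -> Prop).

Variable D : nat -> (G -> Prop) -> Prop.
Hypothesis D_disjoint : forall d, pairwise_disjoint (D d).
Hypothesis D_open : forall d A, D d A -> openG A.
Hypothesis D_refines : forall d, refines (D d) (OU opG (initial_meet U (pair_bound d))).
Hypothesis D_tail_cover : forall N a, exists d A, N <= d /\ D d A /\ A a.

Variables (C P : nat -> (H -> Prop) -> Prop).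
Hypothesis C_open : forall n M, C n M -> openH M.
Hypothesis C_refines : forall n, refines (C n) (OU opH (initial_meet V (pair_bound n))).
Hypothesis P_disjoint : forall k, pairwise_disjoint (P k).
Hypothesis P_late : forall b, exists N, forall d, N <= d ->
  exists x M n, x <= d /\ d <= n /\ P (d + x) M /\ C n M /\ M b.

Definition diag (p : nat) : nat := fst (of_nat p) + snd (of_nat p).

Lemma le_pair_bound_diag p : p <= pair_bound (diag p).
Proof.
  unfold diag. rewrite <- (cancel_to_of p) at 1. rewrite (surjective_pairing (of_nat p)).
  apply to_nat_le_pair_bound.
Qed.

(* Pieces of the group P k small enough to refine O(V t). *)
Definition late_pieces (k t : nat) : (H -> Prop) -> Prop :=
  fun M => P k M /\ exists n, t <= pair_bound n /\ C n M.

Definition selection (p : nat) : (G * H -> Prop) -> Prop :=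
  rects (D (diag p)) (late_pieces (diag p + fst (of_nat p)) p).

Lemma selection_disjoint p : pairwise_disjoint (selection p).
Proof.
  apply rects_pairwise_disjoint; [apply D_disjoint|].
  intros M1 M2 [PM1 _] [PM2 _]. exact (P_disjoint PM1 PM2).
Qed.

Lemma selection_open p R : selection p R -> prod_open openG openH R.
Proof.
  apply rects_open; [apply D_open|]. intros M [_ [n [_ CM]]]. exact (C_open CM).
Qed.

Lemma selection_refines p : refines (selection p) (OU (prod_op opG opH) (rect (U p) (V p))).
Proof.
  apply rects_refine.
  - apply (refines_OU_mono (U := initial_meet U (pair_bound (diag p)))); [|apply D_refines].
    intro u. exact (initial_meet_le (le_pair_bound_diag p)).
  - intros M [_ [n [p_le_n CM]]].
    exact (refines_OU_mono (fun v => initial_meet_le p_le_n) (@C_refines n) CM).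
Qed.

(* A point (a, b): choose N from P_late for b, then a member A of a late
   family D d containing a; a late piece M through b completes A x M. *)
Lemma selection_covers q : exists p R, selection p R /\ R q.
Proof.
  destruct q as [a b]. destruct (P_late b) as [N late_b].
  destruct (D_tail_cover N a) as [d [A [Nd [DA Aa]]]].
  destruct (late_b d Nd) as [x [M [n [xd [dn [PM [CM Mb]]]]]]].
  exists (to_nat (x, d - x)), (rect A M). split; [|split; assumption].
  assert (diag_p : diag (to_nat (x, d - x)) = d).
  { unfold diag. rewrite cancel_of_to. simpl. lia. }
  unfold selection. rewrite diag_p, cancel_of_to.
  exists A, M. repeat split; auto. exists n. split; [|exact CM].
  pose proof (to_nat_le_pair_bound x (d - x)) as bound.
  replace (x + (d - x)) with d in bound by lia.
  pose proof (pair_bound_mono dn). lia.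
Qed.

End Selection.

Lemma rectangle_selection (G H : Type) (opG : G -> G -> G) (eG : G)
  (openG : (G -> Prop) -> Prop) (opH : H -> H -> H) (eH : H)
  (openH : (H -> Prop) -> Prop) (U : nat -> G -> Prop) (V : nat -> H -> Prop) :
  is_topology openG -> is_topology openH ->
  S_c openG (O_nbd opG eG openG) (open_cover openG) ->
  S_c openH (O_nbd opH eH openH) (cgroupable_open_cover openH) ->
  (forall n, nbd_e openG eG (U n)) -> (forall n, nbd_e openH eH (V n)) ->
  exists B : nat -> (G * H -> Prop) -> Prop,
    (forall p, pairwise_disjoint (B p) /\ (forall R, B p R -> prod_open openG openH R) /\
               refines (B p) (OU (prod_op opG opH) (rect (U p) (V p)))) /\
    (forall q, exists p R, B p R /\ R q).
Proof.
  intros topG topH S_G S_H U_nbd V_nbd.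
  destruct (S_c_tail_covers (U := fun d => initial_meet U (pair_bound d)) S_G)
    as [D [D_spec D_tail]].
  { intro d. exact (initial_meet_nbd topG U_nbd _). }
  destruct (S_H (fun n => OU opH (initial_meet V (pair_bound n)))) as [C [C_spec C_cgp]].
  { intro n. exists (initial_meet V (pair_bound n)). split; [|reflexivity].
    exact (initial_meet_nbd topH V_nbd _). }
  destruct (cgroupable_late_pieces (fun n => proj1 (C_spec n)) C_cgp) as [P [P_disj P_late]].
  exists (selection D C P). split.
  - intro p. repeat split.
    + apply (selection_disjoint (fun d => proj1 (D_spec d)) P_disj).
    + apply (selection_open (fun d => proj1 (proj2 (D_spec d)))
                            (fun n => proj1 (proj2 (C_spec n)))).
    + apply (selection_refines (fun d => proj2 (proj2 (D_spec d)))
                               (fun n => proj2 (proj2 (C_spec n)))).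
  - apply (selection_covers D_tail P_late).
Qed.

Theorem theorem3p1
  (G : Type) (opG : G -> G -> G) (invG : G -> G) (eG : G)
  (openG : (G -> Prop) -> Prop)
  (H : Type) (opH : H -> H -> H) (invH : H -> H) (eH : H)
  (openH : (H -> Prop) -> Prop) :
  is_topological_group opG invG eG openG ->
  is_topological_group opH invH eH openH ->
  S_c openG (O_nbd opG eG openG) (open_cover openG) ->
  S_c openH (O_nbd opH eH openH) (cgroupable_open_cover openH) ->
  S_c (prod_open openG openH)
      (O_nbd (prod_op opG opH) (eG, eH) (prod_open openG openH))
      (open_cover (prod_open openG openH)).
Proof.
  intros [topG _] [topH _] S_G S_H A A_nbd.
  assert (rect_inside : forall n, exists UVW : (G -> Prop) * (H -> Prop) * (G * H -> Prop),
    nbd_e openG eG (fst (fst UVW)) /\ nbd_e openH eH (snd (fst UVW)) /\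
    (forall q, rect (fst (fst UVW)) (snd (fst UVW)) q -> snd UVW q) /\
    A n = OU (prod_op opG opH) (snd UVW)).
  { intro n. destruct (A_nbd n) as [W [W_nbd ->]].
    destruct (prod_nbd_rectangle W_nbd) as [U [V [U_nbd [V_nbd UVW]]]].
    exists (U, V, W). auto. }
  destruct (choice _ rect_inside) as [UVW UVW_spec].
  destruct (rectangle_selection (U := fun n => fst (fst (UVW n)))
              (V := fun n => snd (fst (UVW n))) topG topH S_G S_H)
    as [B [B_spec B_cover]]; try apply UVW_spec.
  exists B. split.
  - intro p. destruct (B_spec p) as [B_disj [B_open B_ref]].
    destruct (UVW_spec p) as [_ [_ [in_W ->]]].
    repeat split; auto. exact (refines_OU_mono in_W B_ref).
  - split; [intros R [p BR]; exact (proj1 (proj2 (B_spec p)) R BR)|].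
    intro q. destruct (B_cover q) as [p [R [BR Rq]]]. eauto.
Qed.
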